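(* Let $\delta\le1/4$ and let $\mathcal{I}$ be a $\delta$-ONI instance with $n$ agents. Then for every agent $i\in N^2(\mathcal{I})$, $v_i(2n+1)<\frac1{12}+\delta$.
   Context: Instance with agents $[n]$, goods $[m]$ ($m\ge2n$), additive valuations; goods with index larger than $m$ are dummy goods of value $0$. Ordered: $v_i(1)\ge\dots\ge v_i(m)$ for all $i$. Normalized: every agent $i$ has a partition of the goods into $n$ bundles each of value exactly $1$ to $i$ (an MMS partition). $\alpha$-irreducible: for every agent $i$, $v_i(1)<\alpha$, $v_i(\{2n-1,2n,2n+1\})<\alpha$, $v_i(\{3n-2,\dots,3n+1\})<\alpha$, $v_i(\{1,2n+1\})<\alpha$. $\delta$-ONI: ordered, normalized, $(3/4+\delta)$-irreducible. $B_k=\{k,2n-k+1\}$ for $k\in[n]$; $N^2(\mathcal{I})=\{i\in[n]:\exists k\in[n],\ v_i(B_k)>1\}$. *)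

From mathcomp Require Import all_boot all_order all_algebra.
Set Implicit Arguments. Unset Strict Implicit. Unset Printing Implicit Defensive.
Import Order.TTheory GRing.Theory Num.Theory.
Local Open Scope ring_scope.

(* Conventions: agents are 'I_n (0-based), goods are the natural numbers
   1..m (1-based, as in the paper); v i g is the value of good g to agent i.
   Goods with index > m are dummy goods of value 0 (a hypothesis of the
   instance). *)

Section Inst.
Variable R : realFieldType.
Variables n m : nat.
Variable v : 'I_n -> nat -> R.

Definition ordered : Prop :=
  forall (i : 'I_n) (g : nat), (1 <= g)%N -> (g < m)%N -> v i g.+1 <= v i g.

Definition normalized : Prop :=
  forall i : 'I_n, exists P : nat -> 'I_n,
    forall k : 'I_n, \sum_(1 <= g < m.+1 | P g == k) v i g = 1.

Definition irreducible (alpha : R) : Prop :=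
  forall i : 'I_n,
    [/\ v i 1 < alpha,
        v i (2 * n - 1)%N + v i (2 * n)%N + v i (2 * n + 1)%N < alpha,
        \sum_(3 * n - 2 <= g < 3 * n + 2) v i g < alpha
      & v i 1 + v i (2 * n + 1)%N < alpha].

Definition ONI (delta : R) : Prop :=
  [/\ ordered, normalized & irreducible (3 / 4 + delta)].

(* B_k = {k, 2n-k+1} for k in [n]; with k = j.+1 for j : 'I_n,
   2n - k + 1 = 2n - j. *)
Definition B_val (i : 'I_n) (j : 'I_n) : R := v i j.+1 + v i (2 * n - j)%N.

Definition inN2 (i : 'I_n) : Prop := exists j : 'I_n, B_val i j > 1.

End Inst.

(* If v_i(2n+1) >= 1/12 + delta, the last irreducibility condition forces
   v_i(1) < 2/3.  For a pair B_k = {k, 2n-k+1} worth more than 1, ordering then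
   makes each of the goods 1..k worth more than 1/2 and each of the goods
   k+1..2n-k+1 worth more than 1/3.  Give the former weight 2 and the latter
   weight 1: a bundle of value 1 carries weight at most 2 (one good of each
   kind is already worth more than 1, like B_k), so the n bundles of an MMS
   partition carry weight at most 2n, whereas the total weight is
   2k + (2n-2k+1) = 2n+1. *)

From mathcomp Require Import all_boot all_order all_algebra.
From mathcomp Require Import lra zify.
Set Implicit Arguments. Unset Strict Implicit. Unset Printing Implicit Defensive.
Import Order.TTheory GRing.Theory Num.Theory.
Local Open Scope ring_scope.

Lemma ordered_le (R : realFieldType) n m (v : 'I_n -> nat -> R) :
  ordered m v ->
  forall i g h, (0 < g)%N -> (g <= h <= m)%N -> v i h <= v i g.
Proof.
move=> v_ord i g h g_gt0; elim: h => [|h IH] /andP[gh hm]; first by lia.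
have [->|g_neq] := eqVneq g h.+1; first by [].
apply: le_trans (IH _); first apply: v_ord; lia.
Qed.

Lemma sum_interval_indicator (m k l : nat) : (k <= l <= m)%N ->
  (\sum_(1 <= g < m.+1) (k < g <= l) = l - k)%N.
Proof.
case/andP=> kl lm.
rewrite (@big_cat_nat _ _ _ k.+1) ?ltnS ?(leq_trans kl) //=.
rewrite (@big_cat_nat _ _ _ l.+1 k.+1) ?ltnS //=.
rewrite (@eq_big_nat _ _ _ 1 k.+1 _ (fun=> 0%N)) => [|g /andP[_ gk]]; last first.
  by rewrite ltnNge -ltnS gk.
rewrite (@eq_big_nat _ _ _ l.+1 m.+1 _ (fun=> 0%N)) => [|g /andP[lg _]]; last first.
  by rewrite (leqNgt g l) lg andbF.
rewrite (@eq_big_nat _ _ _ k.+1 l.+1 _ (fun=> 1%N)) => [|g /andP[-> gl]]; last first.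
  by rewrite -ltnS gl.
by rewrite !sum_nat_const_nat !muln0 muln1 addn0 subSS.
Qed.

Lemma count_weight_le2 (R : realFieldType) (a b : R) (x y : nat) :
  1 < 2 * a -> 1 < 3 * b -> 1 < a + b ->
  x%:R * a + y%:R * b <= 1 -> (2 * x + y <= 2)%N.
Proof.
move=> a_gt_half b_gt_third ab_gt1; apply: contra_leT; rewrite -ltnNge => weight_gt2.
have y_ge0 : 0 <= y%:R :> R by [].
case: x weight_gt2 => [|[|x]] weight_gt2.
- have : 3%:R <= y%:R :> R by rewrite ler_nat; lia.
  rewrite mul0r add0r; nra.
- have : 1 <= y%:R :> R by rewrite ler1n; lia.
  rewrite mul1r; nra.
- have : 2%:R <= x.+2%:R :> R by rewrite ler_nat.
  nra.
Qed.

Section Packing.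
Variables (R : realFieldType) (n m : nat) (u : nat -> R) (P : nat -> 'I_n).
Variables (a b : R) (k l : nat).
Hypothesis u_ge0 : forall g, 0 <= u g.
Hypothesis bundle_le1 : forall c, \sum_(1 <= g < m.+1 | P g == c) u g <= 1.
Hypotheses (a_gt_half : 1 < 2 * a) (b_gt_third : 1 < 3 * b) (ab_gt1 : 1 < a + b).
Hypothesis klm : (k <= l <= m)%N.
Hypothesis large_ge_a : forall g, (0 < g <= k)%N -> a <= u g.
Hypothesis medium_ge_b : forall g, (k < g <= l)%N -> b <= u g.

Lemma indicator_weight_le g :
  (0 < g <= k)%N%:R * a + (k < g <= l)%N%:R * b <= u g.
Proof.
case: (boolP (0 < g <= k)%N) => [large|_]; case: (boolP (k < g <= l)%N) => [medium|_].
- by move: large medium => /andP[_ gk] /andP[kg _]; rewrite ltnNge gk in kg.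
- by rewrite mulr1n mul0r addr0 mul1r large_ge_a.
- by rewrite mul0r add0r mul1r medium_ge_b.
- by rewrite !mul0r addr0.
Qed.

Lemma bundle_weight_le2 c :
  (\sum_(1 <= g < m.+1 | P g == c) (2 * (0 < g <= k) + (k < g <= l)) <= 2)%N.
Proof.
rewrite big_split -big_distrr /=; apply: (count_weight_le2 a_gt_half b_gt_third ab_gt1).
apply: le_trans (bundle_le1 c).
rewrite !natr_sum !mulr_suml -big_split /=.
by apply: ler_sum => g _; apply: indicator_weight_le.
Qed.

Lemma packing_bound : (2 * k + (l - k) <= 2 * n)%N.
Proof.
have [kl lm] := andP klm.
have <- : (\sum_(1 <= g < m.+1) (2 * (0 < g <= k) + (k < g <= l)) = 2 * k + (l - k))%N.
  by rewrite big_split -big_distrr /= !sum_interval_indicator ?subn0 ?kl ?(leq_trans kl).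
rewrite (partition_big P predT) //=.
have -> : (2 * n = \sum_(c < n) 2)%N by rewrite sum_nat_const card_ord mulnC.
by apply: leq_sum => c _; apply: bundle_weight_le2.
Qed.

End Packing.

Theorem mainTheorem14 (R : realFieldType) (n m : nat) (v : 'I_n -> nat -> R)
    (delta : R) :
  delta <= 1 / 4 ->
  (2 * n <= m)%N ->
  (forall (i : 'I_n) (g : nat), 0 <= v i g) ->
  (forall (i : 'I_n) (g : nat), (m < g)%N -> v i g = 0) ->
  ONI m v delta ->
  forall i : 'I_n, inN2 v i -> v i (2 * n + 1)%N < 1 / 12 + delta.
Proof.
(* Neither [delta <= 1/4] nor the dummy goods are needed. *)
move=> _ two_n_le_m v_ge0 _ [v_ord v_norm v_irr] i [j Bj_gt1].
rewrite ltNge; apply/negP => v_2n1_large.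
have [_ _ _ v1_v2n1_small] := v_irr i.
have v1_small : v i 1%N < 2 / 3 by lra.
have j_lt_n := ltn_ord j.
have vj_le_v1 : v i j.+1 <= v i 1%N by apply: (ordered_le v_ord); lia.
have v2nj_le_vj : v i (2 * n - j)%N <= v i j.+1 by apply: (ordered_le v_ord); lia.
have [P bundles_eq1] := v_norm i.
have bundles_le1 c : \sum_(1 <= g < m.+1 | P g == c) v i g <= 1 by rewrite bundles_eq1.
have large_ge_a g : (0 < g <= j.+1)%N -> v i j.+1 <= v i g.
  by move=> g_large; apply: (ordered_le v_ord); lia.
have medium_ge_b g : (j.+1 < g <= 2 * n - j)%N -> v i (2 * n - j)%N <= v i g.
  by move=> g_medium; apply: (ordered_le v_ord); lia.
have j_intervals : (j.+1 <= 2 * n - j <= m)%N by lia.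
have a_gt_half : 1 < 2 * v i j.+1 by move: Bj_gt1; rewrite /B_val; lra.
have b_gt_third : 1 < 3 * v i (2 * n - j)%N by move: Bj_gt1; rewrite /B_val; lra.
have := packing_bound (v_ge0 i) bundles_le1 a_gt_half b_gt_third Bj_gt1 j_intervals large_ge_a medium_ge_b.
lia.
Qed.
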